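(* Suppose $p_{XY}$ has full support on $\mathcal{X}\times\mathcal{Y}$ and there exists a joint p.m.f. $p(u,x,y,z)=p_{XY}(x,y)p_{Z|XY}(z|x,y)p(u|x,y,z)$ (with $U$ on a finite set) satisfying the Markov chains $U-X-Y$, $Z-(U,Y)-X$ and $U-(Y,Z)-X$. Then for all $y,y'\in\mathcal{Y}$, $k(y)=k(y')$ and $\{\vec\alpha_1^{(y)},\dots,\vec\alpha_{k(y)}^{(y)}\}=\{\vec\alpha_1^{(y')},\dots,\vec\alpha_{k(y')}^{(y')}\}$.
   Context: $\mathcal{X},\mathcal{Y},\mathcal{Z}$ are finite. For $y\in\mathcal{Y}$ let $\mathcal{Z}^{(y)}=\{z\in\mathcal{Z}:\exists x,\ p_{Z|XY}(z|x,y)>0\}$. For $z,z'\in\mathcal{Z}^{(y)}$, write $z\equiv_y z'$ if the column vectors $(p_{Z|XY}(z|x,y))_{x\in\mathcal{X}}$ and $(p_{Z|XY}(z'|x,y))_{x\in\mathcal{X}}$ are positive scalar multiples of each other; this is an equivalence relation partitioning $\mathcal{Z}^{(y)}=\mathcal{Z}_1^{(y)}\uplus\cdots\uplus\mathcal{Z}_{k(y)}^{(y)}$. For each class, the $|\mathcal{X}|\times|\mathcal{Z}_i^{(y)}|$ matrix $A_i^{(y)}(x,z)=p_{Z|XY}(z|x,y)$ is rank one and can be uniquely written as $A_i^{(y)}(x,z)=\vec\alpha_i^{(y)}(x)\vec\gamma_i^{(y)}(z)$ with $\vec\alpha_i^{(y)}$ a probability vector on $\mathcal{X}$. *)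

From HB Require Import structures.
From mathcomp Require Import all_boot all_order all_algebra.
From Stdlib Require Import ClassicalEpsilon.
Set Implicit Arguments. Unset Strict Implicit. Unset Printing Implicit Defensive.
Import Order.TTheory GRing.Theory Num.Theory.
Local Open Scope ring_scope.

Definition pbool (P : Prop) : bool :=
  if excluded_middle_informative P then true else false.

Definition prob_vec (R : realFieldType) (T : finType) (a : T -> R) : Prop :=
  (forall t, 0 <= a t) /\ \sum_t a t = 1.

(* Markov chain A - B - C for a (joint) p.m.f. q on A x B x C:
   p(a,b,c) p(b) = p(a,b) p(b,c) *)
Definition markov (R : realFieldType) (A B C : finType) (q : A -> B -> C -> R) : Prop :=
  forall a b c,
    q a b c * (\sum_(a' : A) \sum_(c' : C) q a' b c')
    = (\sum_(c' : C) q a b c') * (\sum_(a' : A) q a' b c).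

Section Classes.
Variables (R : realFieldType) (X Y Z : finType) (W : X -> Y -> Z -> R).
(* W x y z = p_{Z|XY}(z|x,y) *)

Definition Zsupp (y : Y) : {set Z} := [set z | [exists x, W x y z > 0]].

Definition zequiv (y : Y) (z z' : Z) : Prop :=
  exists c : R, 0 < c /\ forall x, W x y z = c * W x y z'.

Definition zclasses (y : Y) : {set {set Z}} :=
  [set [set z' in Zsupp y | pbool (zequiv y z z')] | z in Zsupp y].

Definition kcl (y : Y) : nat := #|zclasses y|.

Definition is_alpha (y : Y) (C : {set Z}) (a : X -> R) : Prop :=
  prob_vec a /\ exists gamma : Z -> R, forall x, forall z, z \in C -> W x y z = a x * gamma z.

Definition alpha_set (y : Y) (a : X -> R) : Prop :=
  exists2 C, C \in zclasses y & is_alpha y C a.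
End Classes.

From HB Require Import structures.
From mathcomp Require Import all_boot all_order all_algebra.
From Stdlib Require Import ClassicalEpsilon.
From mathcomp Require Import ring.
Set Implicit Arguments. Unset Strict Implicit. Unset Printing Implicit Defensive.
Import Order.TTheory GRing.Theory Num.Theory.
Local Open Scope ring_scope.

(* Let g(u, x) = p(u | x), which by U - X - Y does not depend on y.  The two
   other chains give p(u, x, y, z) = p(x, y, z) p(u | y, z) = p(u, x, y) p(z | u, y),
   so for any u with p(u, y, z) > 0 the column x |-> p(z | x, y) is proportional
   to x |-> g(u, x).  Such a u also has p(u, y', z') > 0 for some z', so every
   column of p_{Z|XY}(. | ., y) is proportional to some column of
   p_{Z|XY}(. | ., y').  Hence all y share one finite set of normalized columns;
   these are the alpha's, and the classes are their fibres. *)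

Lemma pboolP (P : Prop) : pbool P <-> P.
Proof. by rewrite /pbool; case: excluded_middle_informative. Qed.

Lemma psumr_gt0 (R : numDomainType) (I : finType) (F : I -> R) (i : I) :
  (forall j, 0 <= F j) -> 0 < F i -> 0 < \sum_j F j.
Proof.
by move=> F_ge0 Fi_gt0; rewrite (bigD1 i) //= ltr_wpDr // sumr_ge0.
Qed.

Lemma psumr_gt0P (R : numDomainType) (I : finType) (F : I -> R) :
  (forall i, 0 <= F i) -> 0 < \sum_i F i -> exists i, 0 < F i.
Proof.
move=> F_ge0 /lt0r_neq0/eqP/(psumr_neq0P (fun i _ => F_ge0 i)) [i /andP [_]].
by exists i.
Qed.

Lemma card_fibres (T : finType) (K : eqType) (A : {set T}) (key : T -> K) :
  #|[set [set t' in A | key t' == key t] | t in A]|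
  = size (undup [seq key t | t <- enum A]).
Proof.
set keys := undup _; pose fibre v := [set t in A | key t == v].
have fibre_inj : {in keys &, injective fibre}.
  move=> u v; rewrite mem_undup => /mapP [t tA ->] _ fibre_eq.
  have : t \in fibre v by rewrite -fibre_eq inE -mem_enum tA /=.
  by rewrite inE => /andP [_ /eqP].
rewrite -(size_map fibre); have /card_uniqP <- : uniq [seq fibre v | v <- keys].
  by rewrite map_inj_in_uniq // undup_uniq.
apply: eq_card => C; apply/imsetP/mapP => [[t tA ->]|[v]].
  by exists (key t); rewrite // mem_undup map_f // mem_enum.
by rewrite mem_undup => /mapP [t tA ->] ->; exists t; rewrite // -mem_enum.
Qed.

Section Normalize.
Variables (R : realFieldType) (X : finType).

Definition propto (f h : X -> R) : Prop :=
  exists c : R, 0 < c /\ forall x, f x = c * h x.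

Definition normalize (f : X -> R) : {ffun X -> R} :=
  [ffun x => f x / \sum_x' f x'].

Lemma eq_normalize (f h : X -> R) : f =1 h -> normalize f = normalize h.
Proof.
by move=> fh; apply/ffunP => x; rewrite !ffunE fh (eq_bigr _ (fun x _ => fh x)).
Qed.

Lemma normalize_propto (f h : X -> R) : propto f h -> normalize f = normalize h.
Proof.
move=> [c [c_gt0 fh]]; apply/ffunP => x; rewrite !ffunE.
rewrite (eq_bigr _ (fun x _ => fh x)) -mulr_sumr fh invfM mulrACA.
by rewrite divff ?mul1r // gt_eqF.
Qed.

Lemma propto_normalize (f h : X -> R) :
  0 < \sum_x f x -> 0 < \sum_x h x -> normalize f = normalize h -> propto f h.
Proof.
move=> f_gt0 h_gt0 /ffunP fh; exists ((\sum_x f x) / \sum_x h x).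
split=> [|x]; first exact: divr_gt0.
have := fh x; rewrite !ffunE => {}fh.
rewrite -[f x](divfK (lt0r_neq0 f_gt0)) fh; ring.
Qed.

Lemma normalize_scaled (f a : X -> R) (c : R) :
  \sum_x a x = 1 -> 0 < \sum_x f x -> (forall x, f x = a x * c) ->
  normalize f = [ffun x => a x].
Proof.
move=> a_sum1 f_gt0 fac.
have sum_f : \sum_x f x = c.
  by rewrite (eq_bigr _ (fun x _ => fac x)) -mulr_suml a_sum1 mul1r.
by apply/ffunP => x; rewrite !ffunE fac sum_f mulfK // -sum_f lt0r_neq0.
Qed.

End Normalize.

Section ColumnClasses.
Variables (R : realFieldType) (X Y Z : finType) (W : X -> Y -> Z -> R).
Hypothesis W_ge0 : forall x y z, 0 <= W x y z.

Definition column (y : Y) (z : Z) : X -> R := fun x => W x y z.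

Definition colnorms (y : Y) : seq {ffun X -> R} :=
  [seq normalize (column y z) | z <- enum (Zsupp W y)].

Lemma column_sum_gt0 y z : z \in Zsupp W y -> 0 < \sum_x W x y z.
Proof. by rewrite inE => /existsP [x Wx_gt0]; apply: (psumr_gt0 _ Wx_gt0). Qed.

Lemma zequivE y z z' : z \in Zsupp W y -> z' \in Zsupp W y ->
  zequiv W y z z' <-> normalize (column y z) = normalize (column y z').
Proof.
move=> zS z'S; split; first exact: normalize_propto.
exact: propto_normalize (column_sum_gt0 zS) (column_sum_gt0 z'S).
Qed.

Lemma zclassE y z : z \in Zsupp W y ->
  [set z' in Zsupp W y | pbool (zequiv W y z z')]
  = [set z' in Zsupp W y | normalize (column y z') == normalize (column y z)].
Proof.
move=> zS; apply/setP => z'; rewrite !inE; apply: andb_id2l => z'_supp.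
have z'S : z' \in Zsupp W y by rewrite inE.
apply/idP/eqP => [/pboolP /(zequivE zS z'S) -> // | z'z].
by apply/pboolP/(zequivE zS z'S); rewrite z'z.
Qed.

Lemma kcl_colnorms y : kcl W y = size (undup (colnorms y)).
Proof.
rewrite /kcl /zclasses (eq_in_imset (@zclassE y)).
exact: (card_fibres _ (fun z => normalize (column y z))).
Qed.

Lemma alpha_setE y (a : X -> R) :
  alpha_set W y a <-> [ffun x => a x] \in colnorms y.
Proof.
split=> [[_ /imsetP [z zS ->] [[_ a_sum1] [gamma Wa]]] | /mapP [z zS a_col]].
  have zCz : z \in [set z' in Zsupp W y | pbool (zequiv W y z z')].
    by rewrite zclassE // inE zS eqxx.
  apply/mapP; exists z; first by rewrite mem_enum.
  by rewrite (normalize_scaled a_sum1 (column_sum_gt0 zS) (fun x => Wa x z zCz)).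
rewrite mem_enum in zS.
have aE x : a x = W x y z / \sum_x' W x' y z.
  by rewrite -[a x](ffunE (fun x => a x)) a_col ffunE.
exists [set z' in Zsupp W y | pbool (zequiv W y z z')]; first exact: imset_f.
have S_gt0 := column_sum_gt0 zS.
split.
  split=> [x|]; first by rewrite aE divr_ge0 // ltW.
  by rewrite (eq_bigr _ (fun x _ => aE x)) -mulr_suml divff // lt0r_neq0.
exists (fun z' => \sum_x W x y z') => x z'.
rewrite zclassE // inE => /andP [z'_supp /eqP z'z].
have /ffunP/(_ x) := etrans a_col (esym z'z); rewrite !ffunE => ->.
by rewrite divfK // lt0r_neq0 // column_sum_gt0 // inE.
Qed.

End ColumnClasses.

Section MarkovChains.
Variables (R : realFieldType) (X Y Z U : finType).
Variables (pXY : X -> Y -> R) (W : X -> Y -> Z -> R) (V : X -> Y -> Z -> U -> R).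
Hypotheses (pXY_gt0 : forall x y, 0 < pXY x y)
  (W_ge0 : forall x y z, 0 <= W x y z) (W_sum1 : forall x y, \sum_z W x y z = 1)
  (V_ge0 : forall x y z u, 0 <= V x y z u) (V_sum1 : forall x y z, \sum_u V x y z u = 1).

Let joint u x y z := pXY x y * W x y z * V x y z u.

Hypotheses
  (markov_UXY : markov (fun (u : U) (x : X) (y : Y) => \sum_z joint u x y z))
  (markov_ZUYX : markov (fun (z : Z) (uy : U * Y) (x : X) => joint uy.1 x uy.2 z))
  (markov_UYZX : markov (fun (u : U) (yz : Y * Z) (x : X) => joint u x yz.1 yz.2)).

Definition condU (u : U) (x : X) (y : Y) : R := \sum_z W x y z * V x y z u.

Lemma joint_ge0 u x y z : 0 <= joint u x y z.
Proof. by rewrite !mulr_ge0 // ltW. Qed.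

Lemma sum_joint_Z u x y : \sum_z joint u x y z = pXY x y * condU u x y.
Proof. by rewrite mulr_sumr; apply: eq_bigr => z _; rewrite mulrA. Qed.

Lemma sum_joint_U x y z : \sum_u joint u x y z = pXY x y * W x y z.
Proof. by rewrite -mulr_sumr V_sum1 mulr1. Qed.

Lemma sum_joint_UZ x y : \sum_u \sum_z joint u x y z = pXY x y.
Proof.
rewrite exchange_big (eq_bigr _ (fun z _ => sum_joint_U x y z)) /=.
by rewrite -mulr_sumr W_sum1 mulr1.
Qed.

Lemma condU_indep u x y y' : condU u x y = condU u x y'.
Proof.
suff condU_pX y1 :
    condU u x y1 * \sum_y2 pXY x y2 = \sum_y2 \sum_z joint u x y2 z.
  apply: (mulIf (lt0r_neq0 (psumr_gt0 (fun y2 => ltW (pXY_gt0 x y2)) (pXY_gt0 x y)))).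
  by rewrite !condU_pX.
have := markov_UXY u x y1.
rewrite /= sum_joint_Z sum_joint_UZ exchange_big /=.
rewrite (eq_bigr _ (fun y2 _ => sum_joint_UZ x y2)) => markov_eq.
by apply: (mulfI (lt0r_neq0 (pXY_gt0 x y1))); rewrite mulrA markov_eq mulrC.
Qed.

Lemma column_propto_condU u y z : 0 < \sum_x joint u x y z ->
  propto (column W y z) (fun x => condU u x y).
Proof.
set T := \sum_x _ => T_gt0.
set S := \sum_z' \sum_x' joint u x' y z'.
set N := \sum_u' \sum_x' joint u' x' y z.
have S_gt0 : 0 < S.
  by apply: (psumr_gt0 (fun z' => sumr_ge0 _ (fun x _ => joint_ge0 u x y z')) T_gt0).
have N_gt0 : 0 < N.
  by apply: (psumr_gt0 (fun u' => sumr_ge0 _ (fun x _ => joint_ge0 u' x y z)) T_gt0).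
exists (N / S); split=> [|x]; first exact: divr_gt0.
have markov_Z := markov_ZUYX z (u, y) x; have markov_U := markov_UYZX u (y, z) x.
rewrite /= sum_joint_Z -/S -/T in markov_Z.
rewrite /= sum_joint_U -/N -/T in markov_U.
have W_eq : pXY x y * W x y z * T = joint u x y z * N by rewrite markov_U mulrC.
have condU_eq : pXY x y * condU u x y * T = joint u x y z * S by rewrite markov_Z mulrC.
have pT_neq0 : pXY x y * T != 0 by rewrite lt0r_neq0 // mulr_gt0.
transitivity (joint u x y z * N / (pXY x y * T)).
  by rewrite /column -W_eq; field; rewrite !lt0r_neq0.
rewrite -[joint u x y z](mulfK (lt0r_neq0 S_gt0)) -condU_eq.
by field; rewrite !lt0r_neq0.
Qed.

Lemma matching_column y y' z : z \in Zsupp W y ->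
  exists2 z', z' \in Zsupp W y' &
    normalize (column W y z) = normalize (column W y' z').
Proof.
move=> zS.
have [x0 W_gt0] : exists x0, 0 < W x0 y z by move: zS; rewrite inE => /existsP.
have sum_joint_gt0 : 0 < \sum_u \sum_x joint u x y z.
  rewrite exchange_big (eq_bigr _ (fun x _ => sum_joint_U x y z)) /=.
  exact: (psumr_gt0 (fun x => mulr_ge0 (ltW (pXY_gt0 x y)) (W_ge0 x y z))
            (mulr_gt0 (pXY_gt0 x0 y) W_gt0)).
have [u joint_gt0] := psumr_gt0P
  (fun u => sumr_ge0 _ (fun x _ => joint_ge0 u x y z)) sum_joint_gt0.
have [x1] := psumr_gt0P (fun x => joint_ge0 u x y z) joint_gt0.
rewrite /joint -mulrA pmulr_rgt0 // => WV_gt0.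
have condU_gt0 : 0 < condU u x1 y'.
  by rewrite -(condU_indep u x1 y) (psumr_gt0 _ WV_gt0) // => z'; rewrite mulr_ge0.
have [z'] := psumr_gt0P (fun z' => mulr_ge0 (W_ge0 x1 y' z') (V_ge0 x1 y' z' u))
  condU_gt0.
rewrite mulr_ge0_gt0 // => /andP [W'_gt0 V'_gt0].
have z'S : z' \in Zsupp W y' by rewrite inE; apply/existsP; exists x1.
exists z' => //.
rewrite (normalize_propto (column_propto_condU joint_gt0)).
rewrite (eq_normalize (fun x => condU_indep u x y y')).
apply/esym/normalize_propto/column_propto_condU.
apply: (psumr_gt0 (fun x => joint_ge0 u x y' z') (i := x1)).
by rewrite /joint -mulrA !mulr_gt0.
Qed.

End MarkovChains.

Theorem claim2 (R : realFieldType) (X Y Z U : finType)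
  (pXY : X -> Y -> R) (W : X -> Y -> Z -> R) (V : X -> Y -> Z -> U -> R) :
  (forall x y, 0 < pXY x y) ->
  \sum_(x : X) \sum_(y : Y) pXY x y = 1 ->
  (forall x y z, 0 <= W x y z) ->
  (forall x y, \sum_(z : Z) W x y z = 1) ->
  (forall x y z u, 0 <= V x y z u) ->
  (forall x y z, \sum_(u : U) V x y z u = 1) ->
  let P := fun u x y z => pXY x y * W x y z * V x y z u in
  markov (fun (u : U) (x : X) (y : Y) => \sum_(z : Z) P u x y z) ->
  markov (fun (z : Z) (uy : U * Y) (x : X) => P uy.1 x uy.2 z) ->
  markov (fun (u : U) (yz : Y * Z) (x : X) => P u x yz.1 yz.2) ->
  forall y y' : Y,
    kcl W y = kcl W y' /\
    (forall a : X -> R, alpha_set W y a <-> alpha_set W y' a).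
Proof.
move=> pXY_gt0 _ W_ge0 W_sum1 V_ge0 V_sum1 P markov_UXY markov_ZUYX markov_UYZX.
have colnorms_sub y1 y2 : {subset colnorms W y1 <= colnorms W y2}.
  move=> _ /mapP [z zS ->]; rewrite mem_enum in zS.
  have [z' z'S ->] := matching_column pXY_gt0 W_ge0 W_sum1 V_ge0 V_sum1
    markov_UXY markov_ZUYX markov_UYZX y2 zS.
  by apply: map_f; rewrite mem_enum.
move=> y y'; have colnormsE : colnorms W y =i colnorms W y'.
  by move=> v; apply/idP/idP; apply: colnorms_sub.
split; first by rewrite !kcl_colnorms // (perm_size (perm_undup colnormsE)).
by move=> a; rewrite !alpha_setE // colnormsE.
Qed.
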